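(* Let $p\neq 3$ be a prime, $a\in\mathbb{Q}_p$ with $|a|_p<1$, and assume $\sqrt{a^2+4}$ exists in $\mathbb{Q}_p$ (automatic for $p\ge 5$; for $p=2$ equivalent to $|a|_2\le 1/8$). Let $f(x)=x^3+ax^2$ on $\mathbb{Q}_p$ and let $x_\sigma$ ($\sigma=2,3$) be one of the fixed points $x_{2,3}=\frac{-a\pm\sqrt{a^2+4}}{2}$. The following conditions are equivalent: (i) $SI(x_\sigma)=B_1(x_\sigma)$; (ii) there is $\gamma_0\in S_1(0)$ such that $|\gamma_0^2+3x_\sigma\gamma_0+3|_p<1$; (iii) $\sqrt{-3}$ exists in $\mathbb{Q}_p$.
   Context: $\mathbb{Q}_p$ is the field of $p$-adic numbers with norm $|\cdot|_p$. $B_r(c)=\{x:|x-c|_p<r\}$, $S_r(c)=\{x:|x-c|_p=r\}$. A ball $B_r(x^{(0)})$ centered at a fixed point $x^{(0)}$ of $f$ is a Siegel disc if for every $\rho<r$ the sphere $S_\rho(x^{(0)})$ is invariant, i.e. $x\in S_\rho(x^{(0)})$ implies $f^{(n)}(x)\in S_\rho(x^{(0)})$ for all $n\ge1$ ($f^{(n)}$ the $n$-th iterate); $SI(x^{(0)})$, the maximal Siegel disc, is the union of all Siegel discs centered at $x^{(0)}$. *)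

From HB Require Import structures.
From mathcomp Require Import all_boot all_order all_algebra.
From mathcomp Require Import reals.
Set Implicit Arguments. Unset Strict Implicit. Unset Printing Implicit Defensive.
Import Order.TTheory GRing.Theory Num.Theory.
Local Open Scope ring_scope.

Definition padic_abs_rat (R : realType) (p : nat) (q : rat) : R :=
  if q == 0 then 0
  else (p%:R : R) ^ (Posz (logn p (absz (denq q))) - Posz (logn p (absz (numq q)))).

(* [is_Qp p nrm] : the field K equipped with nrm : K -> R is (a model of) the
   field Q_p of p-adic numbers with its norm |.|_p, i.e. a completion of
   (Q, |.|_p): nrm is a non-archimedean absolute value, it extends |.|_p on
   the canonical copy of Q in K, K is complete, and Q is dense in K.  These
   properties characterise (Q_p, |.|_p) up to isometric isomorphism. *)
Definition is_Qp (p : nat) (R : realType) (K : fieldType) (nrm : K -> R) : Prop :=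
  (forall x : K, 0 <= nrm x) /\
  (forall x : K, nrm x = 0 <-> x = 0) /\
  (forall x y : K, nrm (x * y) = nrm x * nrm y) /\
  (forall x y : K, nrm (x + y) <= Num.max (nrm x) (nrm y)) /\
  (forall q : rat, nrm (ratr q) = padic_abs_rat R p q) /\
  (forall u : nat -> K,
        (forall e : R, 0 < e -> exists N : nat, forall m n : nat,
            (N <= m)%N -> (N <= n)%N -> nrm (u m - u n) < e) ->
        exists l : K, forall e : R, 0 < e -> exists N : nat, forall n : nat,
            (N <= n)%N -> nrm (u n - l) < e) /\
  (forall (x : K) (e : R), 0 < e -> exists q : rat, nrm (x - ratr q) < e).

Section Dyn.
Variables (R : realType) (K : fieldType) (nrm : K -> R).

Definition ballp (c : K) (r : R) (x : K) : Prop := nrm (x - c) < r.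
Definition spherep (c : K) (r : R) (x : K) : Prop := nrm (x - c) = r.

Definition siegel_disc (f : K -> K) (x0 : K) (r : R) : Prop :=
  f x0 = x0 /\
  forall rho : R, rho < r -> forall x : K, spherep x0 rho x ->
    forall n : nat, (1 <= n)%N -> spherep x0 rho (iter n f x).

Definition SI (f : K -> K) (x0 : K) (x : K) : Prop :=
  exists r : R, siegel_disc f x0 r /\ ballp x0 r x.
End Dyn.

From HB Require Import structures.
From mathcomp Require Import all_boot all_order all_algebra.
From mathcomp Require Import reals ring lra.
From Stdlib Require Import Classical.
Set Implicit Arguments. Unset Strict Implicit. Unset Printing Implicit Defensive.
Import Order.TTheory GRing.Theory Num.Theory.
Local Open Scope ring_scope.

(* Write x = xs + y.  Since xs^2 + a xs = 1 we have
   f(xs + y) - xs = y (Q(y) + a (y - xs)) with Q(y) = y^2 + 3 xs y + 3.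
   For |y| < 1 the second factor has norm |3| = 1, so every sphere of radius < 1
   around xs is invariant; for |y| = 1 the image stays on the unit sphere exactly
   when |Q(y)| = 1; and |.|_p takes no value in (1, p).  Hence SI(xs) = B_1(xs)
   iff some unit g has |Q(g)| < 1.  Completing the square,
   4 Q(g) = (2g + 3xs)^2 + 3 + 9 a xs, so for odd p this says that -3 is a square
   modulo p, which lifts to a square root of -3 by Hensel's lemma, proved as a
   contraction argument in the complete field.  For p = 2 every unit is congruent
   to 1, so Q(g) is congruent to 7 and is a unit, while a root of t^2 = -3 would
   make both w = (t - 1)/2 and w + 1 units, which cannot both be congruent to 1. *)

Lemma bernoulli_ineq (R : realDomainType) (d : R) (n : nat) :
  0 <= d -> 1 + n%:R * d <= (1 + d) ^+ n.
Proof.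
move=> d_ge0; elim: n => [|n IHn]; first by rewrite mul0r addr0 expr0.
have X_ge1 : 1 <= (1 + d) ^+ n by rewrite exprn_ege1 // lerDl.
rewrite exprS mulrSr; nra.
Qed.

Lemma exprn_lt_small (R : archiRealFieldType) (c e : R) :
  0 <= c -> c < 1 -> 0 < e -> exists n, c ^+ n < e.
Proof.
move=> c_ge0 c_lt1 e_gt0.
have [->|c_neq0] := eqVneq c 0; first by exists 1%N; rewrite expr1.
have c_gt0 : 0 < c by rewrite lt_def c_neq0.
pose d := c^-1 - 1.
have d_gt0 : 0 < d by rewrite subr_gt0 invf_gt1.
pose n := Num.bound (e^-1 / d).
have n_gt : e^-1 < n%:R * d.
  by rewrite -ltr_pdivrMr // archi_boundP // divr_ge0 // ltW ?invr_gt0.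
have cVn_gt : e^-1 < (c^-1) ^+ n.
  have d1 : 1 + d = c^-1 by rewrite addrC subrK.
  have := bernoulli_ineq n (ltW d_gt0); rewrite d1; lra.
exists n; rewrite -(invrK e) -(invrK (c ^+ n)).
by rewrite ltf_pV2 ?posrE ?invr_gt0 ?exprn_gt0 // -exprVn.
Qed.

Lemma quadratic_root (K : fieldType) (a s : K) : 2 != 0 :> K ->
  s ^+ 2 = a ^+ 2 + 4 -> ((- a + s) / 2) ^+ 2 + a * ((- a + s) / 2) - 1 = 0.
Proof.
move=> two_neq0 s_sqr.
have four_neq0 : 4 != 0 :> K by rewrite (_ : 4 = 2 * 2) ?mulf_neq0 //; ring.
apply: (mulIf four_neq0); rewrite mul0r.
by transitivity (s ^+ 2 - (a ^+ 2 + 4)); [field | rewrite s_sqr subrr].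
Qed.

Lemma siegel_disc_intro (R : realType) (K : fieldType) (nrm : K -> R) (f : K -> K)
    (x0 : K) (r : R) :
  f x0 = x0 ->
  (forall rho, rho < r -> forall y, nrm y = rho -> nrm (f (x0 + y) - x0) = rho) ->
  siegel_disc nrm f x0 r.
Proof.
move=> f_x0 f_sphere; split=> // rho rho_lt x x_sphere n _.
elim: n => //= n IHn.
have -> : iter n f x = x0 + (iter n f x - x0) by rewrite addrC subrK.
exact: f_sphere.
Qed.

Definition nonarchimedean_abs (R : realType) (K : fieldType) (nrm : K -> R) :=
  [/\ forall x, 0 <= nrm x, forall x, nrm x = 0 <-> x = 0,
      forall x y, nrm (x * y) = nrm x * nrm y &
      forall x y, nrm (x + y) <= Num.max (nrm x) (nrm y)].

Section Ultrametric.
Variables (R : realType) (K : fieldType) (nrm : K -> R).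
Hypothesis nrmU : nonarchimedean_abs nrm.

Let nrm_ge0 x : 0 <= nrm x. Proof. by case: nrmU. Qed.
Let nrm_eq0 x : nrm x = 0 <-> x = 0. Proof. by case: nrmU. Qed.
Let nrmM x y : nrm (x * y) = nrm x * nrm y. Proof. by case: nrmU. Qed.
Let nrmD_max x y : nrm (x + y) <= Num.max (nrm x) (nrm y). Proof. by case: nrmU. Qed.

Lemma nrm0 : nrm 0 = 0. Proof. exact/nrm_eq0. Qed.

Lemma nrm_neq0 x : x != 0 -> nrm x != 0.
Proof. by move=> x_neq0; apply/eqP => /nrm_eq0/eqP; rewrite (negPf x_neq0). Qed.

Lemma nrm1 : nrm 1 = 1.
Proof.
apply: (mulfI (nrm_neq0 (oner_neq0 K))).
by rewrite -nrmM !mulr1.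
Qed.

Lemma nrm_sqr_eq1 x : nrm (x ^+ 2) = 1 -> nrm x = 1.
Proof. by rewrite expr2 nrmM => x2; have := nrm_ge0 x; nra. Qed.

Lemma nrmN x : nrm (- x) = nrm x.
Proof.
have nrmN1 : nrm (-1) = 1 by apply: nrm_sqr_eq1; rewrite sqrrN expr1n nrm1.
by rewrite -mulN1r nrmM nrmN1 mul1r.
Qed.

Lemma nrm_distC x y : nrm (x - y) = nrm (y - x).
Proof. by rewrite -nrmN opprB. Qed.

Lemma nrmX x n : nrm (x ^+ n) = nrm x ^+ n.
Proof. by elim: n => [|n IHn]; rewrite ?expr0 ?nrm1 // !exprS nrmM IHn. Qed.

Lemma nrmV x : nrm x^-1 = (nrm x)^-1.
Proof.
have [->|x_neq0] := eqVneq x 0; first by rewrite invr0 nrm0 invr0.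
apply: (mulfI (nrm_neq0 x_neq0)).
by rewrite -nrmM !mulfV ?nrm1 ?nrm_neq0.
Qed.

Lemma nrmD_le x y c : nrm x <= c -> nrm y <= c -> nrm (x + y) <= c.
Proof. by move=> x_le y_le; apply: le_trans (nrmD_max x y) _; rewrite ge_max x_le. Qed.

Lemma nrmD_lt x y c : nrm x < c -> nrm y < c -> nrm (x + y) < c.
Proof. by move=> x_lt y_lt; apply: le_lt_trans (nrmD_max x y) _; rewrite gt_max x_lt. Qed.

Lemma nrmB_le x y c : nrm x <= c -> nrm y <= c -> nrm (x - y) <= c.
Proof. by move=> x_le y_le; apply: nrmD_le; rewrite ?nrmN. Qed.

Lemma nrmB_lt x y c : nrm x < c -> nrm y < c -> nrm (x - y) < c.
Proof. by move=> x_lt y_lt; apply: nrmD_lt; rewrite ?nrmN. Qed.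

Lemma nrmDr x y : nrm x < nrm y -> nrm (x + y) = nrm y.
Proof.
move=> xy; apply/eqP; rewrite eq_le nrmD_le ?(ltW xy) //=.
rewrite leNgt; apply/negP => xy_lt.
by have := nrmB_lt xy_lt xy; rewrite addrC addKr ltxx.
Qed.

Lemma nrmDl x y : nrm y < nrm x -> nrm (x + y) = nrm x.
Proof. by rewrite addrC; apply: nrmDr. Qed.

Lemma nrm_eq_of_close x y : nrm (x - y) < nrm x -> nrm y = nrm x.
Proof.
move=> close; have -> : y = x + - (x - y) by rewrite opprB addrC subrK.
by rewrite nrmDl ?nrmN.
Qed.

Lemma nrm_natr_le1 n : nrm n%:R <= 1.
Proof. by elim: n => [|n IHn]; rewrite ?nrm0 // mulrSr nrmD_le ?nrm1. Qed.

Lemma nrmM_le x y : nrm x <= 1 -> nrm (x * y) <= nrm y.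
Proof. by move=> x_le1; rewrite nrmM ler_piMl. Qed.

Lemma nrm_small_eq0 x : (forall e, 0 < e -> nrm x < e) -> x = 0.
Proof.
move=> x_small; apply/nrm_eq0/eqP; rewrite eq_le nrm_ge0 andbT leNgt.
by apply/negP => x_pos; have := x_small _ x_pos; rewrite ltxx.
Qed.

Lemma nrm_eq1_mulD x y : nrm y <= 1 -> nrm (x * (x + y)) = 1 -> nrm x = 1.
Proof.
move=> y_le1; rewrite nrmM => prod1.
have := nrm_ge0 x; have := nrm_ge0 (x + y).
have [x_lt1|x_gt1|//] := ltgtP (nrm x) 1.
- have : nrm (x + y) <= 1 by apply: nrmD_le => //; apply: ltW.
  nra.
- move: prod1; rewrite nrmDl ?(le_lt_trans y_le1) //; nra.
Qed.

Lemma nrm_intr_or_sub1_lt1 (z : int) : nrm 2 < 1 -> nrm z%:~R < 1 \/ nrm (z%:~R - 1) < 1.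
Proof.
move=> two_small.
have natr_or_sub1 n : nrm n%:R < 1 \/ nrm (n%:R - 1) < 1.
  elim: n => [|n [n_small|n1_small]]; first by left; rewrite nrm0 ltr01.
  - by right; rewrite mulrSr addrK.
  - left; have -> : n.+1%:R = n%:R - 1 + 2 :> K by rewrite mulrSr; ring.
    exact: nrmD_lt.
case: z => n; first exact: natr_or_sub1.
rewrite NegzE mulrNz; have [n_small|n1_small] := natr_or_sub1 n.+1.
  by left; rewrite nrmN.
right; have -> : - n.+1%:R - 1 = - (n.+1%:R - 1) - 2 :> K by ring.
by apply: nrmB_lt; rewrite ?nrmN.
Qed.

Definition nrm_cauchy (u : nat -> K) : Prop :=
  forall e : R, 0 < e -> exists N : nat, forall m n : nat,
    (N <= m)%N -> (N <= n)%N -> nrm (u m - u n) < e.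

Definition nrm_cvg_to (u : nat -> K) (l : K) : Prop :=
  forall e : R, 0 < e -> exists N : nat, forall n : nat,
    (N <= n)%N -> nrm (u n - l) < e.

Section Complete.
Hypothesis nrm_complete : forall u, nrm_cauchy u -> exists l, nrm_cvg_to u l.

Lemma geometric_cvg (u : nat -> K) (c r : R) : 0 <= c -> c < 1 -> 0 < r ->
  (forall n, nrm (u n.+1 - u n) <= c ^+ n * r) -> exists l, nrm_cvg_to u l.
Proof.
move=> c_ge0 c_lt1 r_gt0 u_step.
have u_tail n m : (n <= m)%N -> nrm (u m - u n) <= c ^+ n * r.
  move/subnKC <-; elim: (m - n)%N => [|k IHk].
    by rewrite addn0 subrr nrm0; apply: mulr_ge0; [exact: exprn_ge0 | exact: ltW].
  rewrite addnS -(subrK (u (n + k)%N) (u _)) -addrA; apply: nrmD_le => //.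
  apply: le_trans (u_step _) (ler_wpM2r (ltW r_gt0) _).
  exact: (ler_wiXn2l c_ge0 (ltW c_lt1) (leq_addr k n)).
apply: nrm_complete => e e_gt0.
have [N cN] := exprn_lt_small c_ge0 c_lt1 (divr_gt0 e_gt0 r_gt0).
exists N => m n Nm Nn.
have -> : u m - u n = (u m - u N) - (u n - u N) by ring.
by apply: nrmB_lt; apply: le_lt_trans (u_tail _ _ _) _; rewrite // -ltr_pdivlMr.
Qed.

Lemma contraction_fixed_point (F : K -> K) (r k : R) : 0 < r -> 0 <= k -> k < 1 ->
  (forall x, nrm x <= r -> nrm (F x) <= r) ->
  (forall x y, nrm x <= r -> nrm y <= r -> nrm (F x - F y) <= k * nrm (x - y)) ->
  exists2 l, nrm l <= r & F l = l.
Proof.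
move=> r_gt0 k_ge0 k_lt1 F_ball F_lip.
pose u n := iter n F 0.
have u_ball n : nrm (u n) <= r.
  by elim: n => [|n IHn]; [rewrite /u /= nrm0 ltW | apply: F_ball].
have u_step n : nrm (u n.+1 - u n) <= k ^+ n * r.
  elim: n => [|n IHn]; first by rewrite mul1r subr0 F_ball // nrm0 ltW.
  apply: le_trans (F_lip (u n.+1) (u n) (u_ball _) (u_ball _)) _.
  by rewrite exprS -mulrA ler_wpM2l.
have [l u_cvg] := geometric_cvg k_ge0 k_lt1 r_gt0 u_step.
have l_ball : nrm l <= r.
  have [N uN] := u_cvg r r_gt0.
  have -> : l = u N - (u N - l) by ring.
  by apply: nrmB_le; [apply: u_ball | apply/ltW/uN].
exists l => //; apply/eqP; rewrite -subr_eq0; apply/eqP/nrm_small_eq0 => e e_gt0.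
have [N uN] := u_cvg e e_gt0.
have -> : F l - l = (F l - F (u N)) + (u N.+1 - l) by rewrite /u iterS; ring.
apply: nrmD_lt; last exact: uN.
apply: le_lt_trans (F_lip _ _ l_ball (u_ball N)) _.
by rewrite nrm_distC; apply: le_lt_trans (uN N (leqnn N)); rewrite ler_piMl // ltW.
Qed.

Lemma hensel_sqrt (c w : K) : nrm 2 = 1 -> nrm w = 1 -> nrm (c - w ^+ 2) < 1 ->
  exists t, t ^+ 2 = c.
Proof.
move=> nrm2 nrmw c_close.
pose e := c - w ^+ 2; pose r := (1 + nrm e) / 2.
have := nrm_ge0 e; move: c_close; rewrite -/e => e_lt1 e_ge0.
have r_gt0 : 0 < r by rewrite /r; lra.
have r_lt1 : r < 1 by rewrite /r; lra.
have e_le_r : nrm e <= r by rewrite /r; lra.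
have w2_neq0 : 2 * w != 0.
  by apply/eqP => /(congr1 nrm); rewrite nrmM nrm2 nrmw nrm0 mulr1; apply/eqP/oner_neq0.
have nrm_div h : nrm (h / (2 * w)) = nrm h.
  by rewrite nrmM nrmV nrmM nrm2 nrmw mulr1 invr1 mulr1.
(* (w + h)^2 = c exactly when h is a fixed point of F. *)
pose F h := (e - h ^+ 2) / (2 * w).
have F_ball h : nrm h <= r -> nrm (F h) <= r.
  move=> h_le; rewrite nrm_div nrmB_le // nrmX expr2.
  by have := nrm_ge0 h; nra.
have F_lip x y : nrm x <= r -> nrm y <= r -> nrm (F x - F y) <= r * nrm (x - y).
  move=> x_le y_le.
  have -> : F x - F y = (x + y) * (y - x) / (2 * w) by rewrite /F -mulrBl; congr (_ * _); ring.
  by rewrite nrm_div nrmM nrm_distC ler_wpM2r ?nrmD_le.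
have [l _ Fl] := contraction_fixed_point r_gt0 (ltW r_gt0) r_lt1 F_ball F_lip.
exists (w + l).
have l_eq : e - l ^+ 2 = l * (2 * w) by rewrite -{2}Fl divfK.
apply/eqP; rewrite -subr_eq0 -[c](subrK (w ^+ 2)) -/e; apply/eqP.
by transitivity (l * (2 * w) - (e - l ^+ 2)); [ring | rewrite l_eq subrr].
Qed.

End Complete.

(* The first hypothesis says that the residue field is F_2. *)
Lemma no_sqrtN3 : (forall u, nrm u = 1 -> nrm (u - 1) < 1) -> 2 != 0 :> K ->
  ~ exists t : K, t ^+ 2 = - 3.
Proof.
move=> unit_near1 two_neq0 [t t_sqr].
pose w := (t - 1) / 2.
have w_root : w * (w + 1) = - 1.
  have four_neq0 : 4 != 0 :> K by rewrite (_ : 4 = 2 * 2) ?mulf_neq0 //; ring.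
  apply: (mulIf four_neq0).
  by transitivity (t ^+ 2 - 1); [rewrite /w; field | rewrite t_sqr; ring].
have w_prod : nrm (w * (w + 1)) = 1 by rewrite w_root nrmN nrm1.
have nrm_w : nrm w = 1 by apply: nrm_eq1_mulD w_prod; rewrite nrm1.
have nrm_w1 : nrm (w + 1) = 1 by move: w_prod; rewrite nrmM nrm_w mul1r.
by have := unit_near1 _ nrm_w1; rewrite addrK nrm_w ltxx.
Qed.

Section CubicMap.
Variables a xs : K.
Hypothesis a_small : nrm a < 1.
Hypothesis xs_root : xs ^+ 2 + a * xs - 1 = 0.
Hypothesis nrm3 : nrm 3 = 1.

Local Notation f := (fun x : K => x ^+ 3 + a * x ^+ 2).
Local Notation Q := (fun g : K => g ^+ 2 + 3 * xs * g + 3).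

Lemma nrm_xs : nrm xs = 1.
Proof.
apply: (nrm_eq1_mulD (ltW a_small)).
have -> : xs * (xs + a) = 1 + (xs ^+ 2 + a * xs - 1) by ring.
by rewrite xs_root addr0 nrm1.
Qed.

Lemma f_xs : f xs = xs.
Proof.
by apply/eqP; rewrite -subr_eq0 /=; apply/eqP; rewrite -(mulr0 xs) -xs_root; ring.
Qed.

Lemma f_shift y : f (xs + y) - xs = y * (Q y + a * (y - xs)).
Proof. by rewrite -[RHS]addr0 -[0](mulr0 (xs + 3 * y)) -xs_root /=; ring. Qed.

Lemma nrm_a_shift y : nrm y <= 1 -> nrm (a * (y - xs)) < 1.
Proof.
move=> y_le1; rewrite nrmM; apply: le_lt_trans a_small.
by rewrite ler_piMr // nrmB_le ?nrm_xs.
Qed.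

Lemma nrm_Q_le1 y : nrm y <= 1 -> nrm (Q y) <= 1.
Proof.
move=> y_le1; apply: nrmD_le; last by rewrite nrm3.
apply: nrmD_le; first by rewrite nrmX exprn_ile1.
by rewrite !nrmM nrm3 nrm_xs !mul1r.
Qed.

Lemma f_sphere_small y : nrm y < 1 -> nrm (f (xs + y) - xs) = nrm y.
Proof.
move=> y_small; rewrite f_shift nrmM.
have -> : Q y + a * (y - xs) = 3 + (y * (3 * xs + y) + a * (y - xs)) by rewrite /=; ring.
have rest_small : nrm (y * (3 * xs + y) + a * (y - xs)) < 1.
  apply: nrmD_lt; last exact/nrm_a_shift/ltW.
  rewrite nrmM; apply: (le_lt_trans _ y_small).
  rewrite ler_piMr //; apply: nrmD_le; last exact: ltW.
  by rewrite nrmM nrm3 nrm_xs mulr1.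
by rewrite nrmDl nrm3 ?mulr1.
Qed.

Lemma f_unit_lt y : nrm y = 1 -> nrm (Q y) < 1 -> nrm (f (xs + y) - xs) < 1.
Proof. by move=> y1 Qy_small; rewrite f_shift nrmM y1 mul1r nrmD_lt ?nrm_a_shift ?y1. Qed.

Lemma f_unit_eq y : nrm y = 1 -> ~ nrm (Q y) < 1 -> nrm (f (xs + y) - xs) = 1.
Proof.
move=> y1 Qy_big.
have Qy1 : nrm (Q y) = 1.
  by apply/eqP; rewrite eq_le nrm_Q_le1 ?y1 //= leNgt; apply/negP.
by rewrite f_shift nrmM y1 mul1r nrmDl ?Qy1 ?nrm_a_shift ?y1.
Qed.

Lemma siegel_disc_ball1 : siegel_disc nrm f xs 1.
Proof.
apply: siegel_disc_intro => [|rho rho_lt1 y y_rho]; first exact: f_xs.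
by subst rho; apply: f_sphere_small.
Qed.

Lemma siegel_disc_no_residue_root (c : R) :
  (forall x, 1 < nrm x -> c <= nrm x) ->
  ~ (exists g, nrm g = 1 /\ nrm (Q g) < 1) -> siegel_disc nrm f xs c.
Proof.
move=> gap no_root; apply: siegel_disc_intro => [|rho rho_lt y y_rho]; first exact: f_xs.
subst rho; have [y_small|y_big|y1] := ltgtP (nrm y) 1.
- exact: f_sphere_small.
- by have := gap _ y_big; rewrite leNgt rho_lt.
- by rewrite y1 f_unit_eq // => Qy_small; apply: no_root; exists y.
Qed.

Lemma residue_root_not_siegel_disc (r : R) :
  (exists g, nrm g = 1 /\ nrm (Q g) < 1) -> 1 < r -> ~ siegel_disc nrm f xs r.
Proof.
move=> [g [g1 Qg_small]] r_gt1 [_ spheres].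
have g_sphere : spherep nrm xs 1 (xs + g) by rewrite /spherep addrC addKr.
have := spheres 1 r_gt1 _ g_sphere 1%N (leqnn 1); rewrite /spherep /= => f_g.
by have := f_unit_lt g1 Qg_small; rewrite f_g ltxx.
Qed.

Lemma SI_ball1_iff (c : R) : 1 < c -> (forall x, 1 < nrm x -> c <= nrm x) ->
  (forall x, SI nrm f xs x <-> ballp nrm xs 1 x) <->
  exists g, nrm g = 1 /\ nrm (Q g) < 1.
Proof.
move=> c_gt1 gap; split => [SI_ball|root x].
- apply: NNPP => no_root.
  have : SI nrm f xs (xs + 1).
    exists c; split; first exact: siegel_disc_no_residue_root.
    by rewrite /ballp addrC addKr nrm1.
  by move/SI_ball; rewrite /ballp addrC addKr nrm1 ltxx.
- split => [[r [disc x_in]]|x_in]; last by exists 1; split; first exact: siegel_disc_ball1.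
  rewrite /ballp ltNge; apply/negP => x_far.
  exact: (residue_root_not_siegel_disc root (le_lt_trans x_far x_in) disc).
Qed.

Lemma Q_square g : 4 * Q g = (2 * g + 3 * xs) ^+ 2 + 3 + 9 * a * xs.
Proof.
apply/eqP; rewrite -subr_eq0; apply/eqP.
by rewrite -[0](mulr0 (-9)) -xs_root /=; ring.
Qed.

Lemma nrm_natr_a_xs n : nrm (n%:R * a * xs) < 1.
Proof.
rewrite -mulrA; apply: (le_lt_trans (nrmM_le _ (nrm_natr_le1 n))).
by rewrite nrmM nrm_xs mulr1.
Qed.

Lemma residue_root_sqrtN3 :
  (forall u, nrm_cauchy u -> exists l, nrm_cvg_to u l) -> nrm 2 = 1 ->
  (exists g, nrm g = 1 /\ nrm (Q g) < 1) -> exists t : K, t ^+ 2 = - 3.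
Proof.
move=> nrm_complete nrm2 [g [g1 Qg_small]].
pose w := 2 * g + 3 * xs.
have w_close : nrm (- 3 - w ^+ 2) < 1.
  have -> : - 3 - w ^+ 2 = 9 * a * xs - 4 * Q g by rewrite Q_square /w; ring.
  apply: nrmB_lt; first exact: nrm_natr_a_xs.
  exact: le_lt_trans (nrmM_le _ (nrm_natr_le1 4)) Qg_small.
have w1 : nrm w = 1.
  apply: nrm_sqr_eq1; rewrite -nrm3 -(nrmN 3).
  by apply: nrm_eq_of_close; rewrite nrmN nrm3.
exact: (hensel_sqrt nrm_complete nrm2 w1 w_close).
Qed.

Lemma sqrtN3_residue_root : nrm 2 = 1 ->
  (exists t : K, t ^+ 2 = - 3) -> exists g, nrm g = 1 /\ nrm (Q g) < 1.
Proof.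
move=> nrm2 [t t_sqr].
have two_neq0 : 2 != 0 :> K.
  by apply/eqP => two0; move: nrm2; rewrite two0 nrm0; apply/eqP; rewrite eq_sym oner_neq0.
have t1 : nrm t = 1 by apply: nrm_sqr_eq1; rewrite t_sqr nrmN nrm3.
pose g := (t - 3 * xs) / 2.
have Qg_small : nrm (Q g) < 1.
  have Qg : 4 * Q g = 9 * a * xs.
    rewrite Q_square (_ : 2 * g + 3 * xs = t); last by rewrite /g mulrC divfK // subrK.
    by rewrite t_sqr addNr add0r.
  have nrm4 : nrm 4 = 1 by rewrite (_ : 4 = 2 * 2) ?nrmM ?nrm2 ?mulr1 //; ring.
  by have := nrm_natr_a_xs 9; rewrite -Qg nrmM nrm4 mul1r.
exists g; split => //.
have g_le1 : nrm g <= 1.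
  rewrite nrmM nrmV nrm2 invr1 mulr1 nrmB_le ?t1 //.
  by rewrite nrmM nrm3 nrm_xs mulr1.
apply/eqP; rewrite eq_le g_le1 /= leNgt; apply/negP => g_small.
move: Qg_small; rewrite (_ : Q g = 3 + g * (g + 3 * xs)) /=; last by ring.
rewrite nrmDl ?nrm3 ?ltxx // nrmM; apply: (le_lt_trans _ g_small).
rewrite ler_piMr //; apply: nrmD_le; first exact: ltW.
by rewrite nrmM nrm3 nrm_xs mulr1.
Qed.

Lemma no_residue_root : (forall u, nrm u = 1 -> nrm (u - 1) < 1) ->
  ~ exists g, nrm g = 1 /\ nrm (Q g) < 1.
Proof.
move=> unit_near1 [g [g1 Qg_small]].
have two_small : nrm 2 < 1.
  by have := unit_near1 (-1); rewrite nrmN nrm1 -opprD nrmN => ->.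
have nrm7 : nrm 7 = 1.
  rewrite (_ : 7 = 1 + 2 * 3); last by ring.
  by rewrite nrmDl nrm1 // nrmM nrm3 mulr1.
move: Qg_small.
rewrite (_ : Q g = 7 + ((g ^+ 2 - 1) + 3 * (xs * g - 1))) /=; last by ring.
rewrite nrmDl ?nrm7 ?ltxx //; apply: nrmD_lt.
  by apply: unit_near1; rewrite nrmX g1 expr1n.
by rewrite nrmM nrm3 mul1r unit_near1 // nrmM nrm_xs g1 mulr1.
Qed.

End CubicMap.

Section PadicNorm.
Variable p : nat.
Hypothesis p_prime : prime p.
Hypothesis nrm_ratr : forall q : rat, nrm (ratr q) = padic_abs_rat R p q.

Lemma nrm_natr n : (0 < n)%N -> nrm n%:R = (p%:R ^+ logn p n)^-1.
Proof.
move=> n_gt0; rewrite -(ratr_nat K n) nrm_ratr /padic_abs_rat pnatr_eq0.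
rewrite (negPf (lt0n_neq0 n_gt0)).
by rewrite -[n%:R]/((n%:Z)%:~R : rat) denq_int numq_int logn1 sub0r -exprnN.
Qed.

Lemma natr_neq0 n : (0 < n)%N -> n%:R != 0 :> K.
Proof.
move=> n_gt0; apply/eqP => n0; have := nrm_natr n_gt0.
rewrite n0 nrm0 => /eqP; rewrite eq_sym invr_eq0 expf_eq0 pnatr_eq0 => /andP[_ /eqP p0].
by move: p_prime; rewrite p0.
Qed.

Lemma nrm_natr_lt1 n : (nrm n%:R < 1) = (p %| n)%N.
Proof.
have [->|n_gt0] := posnP n; first by rewrite nrm0 ltr01 dvdn0.
rewrite nrm_natr // invf_lt1 ?exprn_gt0 ?ltr0n ?prime_gt0 //.
by rewrite exprn_egt1 ?ltr1n ?prime_gt1 // -lt0n logn_gt0 mem_primes p_prime n_gt0.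
Qed.

Lemma nrm_natr_coprime n : ~~ (p %| n)%N -> nrm n%:R = 1.
Proof. by move=> p_ndvd; apply/eqP; rewrite eq_le nrm_natr_le1 leNgt nrm_natr_lt1. Qed.

Lemma nrm_intr (z : int) : nrm z%:~R = nrm (`|z|%N)%:R.
Proof. by case: z => n //; rewrite NegzE mulrNz nrmN abszN. Qed.

Lemma nrm_ratr_eq1 q : nrm (ratr q) = 1 ->
  nrm (numq q)%:~R = 1 /\ nrm (denq q)%:~R = 1.
Proof.
rewrite /ratr nrmM nrmV !nrm_intr => /divr1_eq AB.
set A := `|numq q|%N in AB *; set B := `|denq q|%N in AB *.
suff A1 : nrm A%:R = 1 by rewrite -AB A1.
apply/eqP; rewrite eq_le nrm_natr_le1 leNgt nrm_natr_lt1; apply/negP => pA.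
have pB : (p %| B)%N by rewrite -nrm_natr_lt1 -AB nrm_natr_lt1.
have : (p %| gcdn A B)%N by rewrite dvdn_gcd pA pB.
by rewrite (eqP (coprime_num_den q)) dvdn1 => /eqP p1; move: p_prime; rewrite p1.
Qed.

Lemma nrm_ratr_sub1_lt1 q : nrm 2 < 1 -> nrm (ratr q) = 1 -> nrm (ratr q - 1) < 1.
Proof.
move=> two_small /nrm_ratr_eq1 [A1 B1].
have residue (z : int) : nrm z%:~R = 1 -> nrm (z%:~R - 1) < 1.
  by move=> z1; case: (nrm_intr_or_sub1_lt1 z two_small) => //; rewrite z1 ltxx.
have B_neq0 : (denq q)%:~R != 0 :> K.
  by apply/eqP => B0; move: B1; rewrite B0 nrm0; apply/eqP; rewrite eq_sym oner_neq0.
have -> : ratr q - 1 = ((numq q)%:~R - 1 - ((denq q)%:~R - 1)) / (denq q)%:~R :> K.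
  by rewrite /ratr; field.
by rewrite nrmM nrmV B1 invr1 mulr1 nrmB_lt ?residue.
Qed.

Section Dense.
Hypothesis nrm_dense : forall x e, 0 < e -> exists q, nrm (x - ratr q) < e.

Lemma nrm_gt1 x : 1 < nrm x -> p%:R <= nrm x.
Proof.
move=> x_gt1; have [q q_close] := nrm_dense x (lt_trans ltr01 x_gt1).
rewrite -(nrm_eq_of_close q_close) in x_gt1 *.
move: x_gt1; rewrite nrm_ratr /padic_abs_rat; case: ifP => _; first by rewrite ltr10.
have p_gt1 : 1 < p%:R :> R by rewrite ltr1n prime_gt1.
rewrite -(expr0z (p%:R : R)) ltr_eXz2l // => z_gt0.
by rewrite -[X in X <= _]expr1z ler_eXz2l // -gtz0_ge1.
Qed.

Lemma nrm_sub1_lt1 u : nrm 2 < 1 -> nrm u = 1 -> nrm (u - 1) < 1.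
Proof.
move=> two_small u1; have [q q_close] := nrm_dense u ltr01.
have q1 : nrm (ratr q) = 1 by rewrite -u1; apply: nrm_eq_of_close; rewrite u1.
have -> : u - 1 = (u - ratr q) + (ratr q - 1) by ring.
by rewrite nrmD_lt ?nrm_ratr_sub1_lt1.
Qed.

End Dense.
End PadicNorm.
End Ultrametric.

Theorem lemma4p5 (p : nat) (R : realType) (K : fieldType) (nrm : K -> R)
    (HK : is_Qp p nrm) (hp : prime p) (hp3 : p != 3%N)
    (a : K) (ha : nrm a < 1) (s : K) (hs : s ^+ 2 = a ^+ 2 + 4) :
  let f := fun x : K => x ^+ 3 + a * x ^+ 2 in
  let xs := (- a + s) / 2 in
  ((forall x : K, SI nrm f xs x <-> ballp nrm xs 1 x) <->
     (exists g : K, nrm g = 1 /\ nrm (g ^+ 2 + 3 * xs * g + 3) < 1))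
  /\
  ((exists g : K, nrm g = 1 /\ nrm (g ^+ 2 + 3 * xs * g + 3) < 1) <->
     (exists t : K, t ^+ 2 = - 3)).
Proof.
case: HK => nrm_ge0 [nrm_eq0 [nrmM [nrmD_max [nrm_ratr [nrm_complete nrm_dense]]]]].
have nrmU : nonarchimedean_abs nrm by split.
move=> f xs.
have two_neq0 : 2 != 0 :> K by apply: (natr_neq0 nrmU hp nrm_ratr).
have nrm3 : nrm 3 = 1.
  by apply: (nrm_natr_coprime nrmU hp nrm_ratr); rewrite dvdn_prime2.
have xs_root : xs ^+ 2 + a * xs - 1 = 0 by apply: quadratic_root.
split.
  apply: (SI_ball1_iff nrmU ha xs_root nrm3 (c := p%:R)).
    by rewrite ltr1n prime_gt1.
  exact: (nrm_gt1 nrmU hp nrm_ratr nrm_dense).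
have [p2|p_neq2] := eqVneq p 2%N.
  have two_small : nrm 2 < 1 by rewrite (nrm_natr_lt1 nrmU hp nrm_ratr) p2.
  have unit_near1 u : nrm u = 1 -> nrm (u - 1) < 1.
    exact: (nrm_sub1_lt1 nrmU hp nrm_ratr nrm_dense two_small).
  split => [/(no_residue_root nrmU ha xs_root nrm3 unit_near1)|
            /(no_sqrtN3 nrmU unit_near1 two_neq0)] //.
have nrm2 : nrm 2 = 1.
  by apply: (nrm_natr_coprime nrmU hp nrm_ratr); rewrite dvdn_prime2.
split; first exact: (residue_root_sqrtN3 nrmU ha xs_root nrm3 nrm_complete nrm2).
exact: (sqrtN3_residue_root nrmU ha xs_root nrm3 nrm2).
Qed.
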